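(* Let $E/\mathbb{Q}$ be the elliptic curve $y^2=x^3+a_4x+a_6$ with $a_4,a_6\in\mathbb{Z}$. Suppose $(u,v)\in\mathbb{Z}^2$ is map-suitable for $E$ and $-D_E(u,v)$ is a negative fundamental discriminant. Then: (1) $v$ is square-free and $\gcd(u,v)=1$. (2) If $P\in E(\mathbb{Q})$ is not the point at infinity $\mathcal{O}$, there exist $A,B,C\in\mathbb{Z}$ with $\gcd(A,C)=\gcd(B,C)=1$ and $C>0$ such that $P=(A/C^2,B/C^3)$; putting $a=Av+C^2u$ and $g=\gcd(C,v)$, there exists an integer $\mu$ with $\frac{C^3}{g^2}\mu\equiv1\pmod{\frac{va}{g^2}}$. (3) For any such $\mu$, the form $$\frac{va}{g^2}x^2+2\mu\frac{Bv^2}{g^2}xy+\frac{\mu^2\frac{B^2v^4}{g^4}+d_E(u,v)}{\frac{va}{g^2}}y^2$$ is a positive definite binary quadratic form with integer coefficients and discriminant $-D_E(u,v)$.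
   Context: For integers $u,v$ put $d_E(u,v):=v(u^3+a_4uv^2-a_6v^3)$ and $D_E(u,v):=4d_E(u,v)$. A pair $(u,v)\in\mathbb{Z}^2$ is map-suitable for $E$ if $u$, $v$, $3u^2+a_4v^2$ and $D_E(u,v)$ are all positive. *)

From mathcomp Require Import all_boot all_order all_algebra.
Set Implicit Arguments. Unset Strict Implicit. Unset Printing Implicit Defensive.
Import Order.TTheory GRing.Theory Num.Theory.
Local Open Scope ring_scope.

Definition dE (a4 a6 u v : int) : int := v * (u ^+ 3 + a4 * u * v ^+ 2 - a6 * v ^+ 3).
Definition DE (a4 a6 u v : int) : int := 4 * dE a4 a6 u v.

Definition map_suitable (a4 a6 u v : int) : Prop :=
  [/\ 0 < u, 0 < v, 0 < 3 * u ^+ 2 + a4 * v ^+ 2 & 0 < DE a4 a6 u v].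

(* n is square-free: no square d^2 with |d| > 1 divides n (so 0 is not square-free) *)
Definition squarefree_int (n : int) : Prop :=
  forall d : int, (d * d %| n)%Z -> `|d| = 1.

Definition fundamental_discriminant (D : int) : Prop :=
  ((D %% 4)%Z = 1 /\ squarefree_int D) \/
  (exists m : int, D = 4 * m /\ ((m %% 4)%Z = 2 \/ (m %% 4)%Z = 3) /\ squarefree_int m).

Definition nonsingular (a4 a6 : int) : Prop := 4 * a4 ^+ 3 + 27 * a6 ^+ 2 != 0.

(* affine rational point (x,y) of E, i.e. a point of E(Q) other than O *)
Definition on_curve (a4 a6 : int) (x y : rat) : Prop :=
  y ^+ 2 = x ^+ 3 + a4%:~R * x + a6%:~R.

Definition pos_def_form (a b c : int) : Prop :=
  forall x y : int, (x, y) != (0, 0) -> 0 < a * x ^+ 2 + b * x * y + c * y ^+ 2.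

From mathcomp Require Import all_boot all_order all_algebra.
From mathcomp Require Import ring lra.
Import Order.TTheory GRing.Theory Num.Theory.
Set Implicit Arguments. Unset Strict Implicit. Unset Printing Implicit Defensive.
Local Open Scope ring_scope.

(* Since 4 divides D_E, the fundamental discriminant -D_E = 4 (-d_E) forces
   d_E = v (u^3 + a4 u v^2 - a6 v^3) to be square-free, which gives (1).
   A rational point is (A/C^2, B/C^3) with B^2 = A^3 + a4 A C^4 + a6 C^6.  For
   f(x) = x^3 + a4 x + a6 we have f(-u/v) = -d_E/v^4 < 0 and f'(-u/v) > 0, so f < 0
   on (-oo, -u/v] and the abscissa A/C^2 exceeds -u/v, i.e. a = A v + C^2 u > 0.
   Writing C = g C1, v = g v1, the factorization of f(A/C^2) - f(-u/v) shows that
   M = va/g^2 divides (B v^2/g^2)^2 + (C^3/g^2)^2 d_E.  Multiplying by the square of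
   an inverse mu of C^3/g^2 modulo M, the form (M, 2 mu B v^2/g^2, .) has integer
   coefficients and discriminant -4 d_E < 0, and M > 0 makes it positive definite. *)

Lemma squarefree_intN (n : int) : squarefree_int (- n) <-> squarefree_int n.
Proof. by split=> sqf d; [rewrite -rpredN; apply: sqf | rewrite rpredN; apply: sqf]. Qed.

Lemma squarefree_int_dvd (m n : int) :
  (m %| n)%Z -> squarefree_int n -> squarefree_int m.
Proof. by move=> mn sqf d dm; apply/sqf/(dvdz_trans dm). Qed.

Lemma squarefree_int_coprime (n x y : int) :
  squarefree_int n -> (x * y %| n)%Z -> coprimez x y.
Proof.
move=> sqf xyn; apply/eqP.
have gg_n : (gcdz x y * gcdz x y %| n)%Z.
  by apply: dvdz_trans xyn; apply: dvdz_mul; [apply: dvdz_gcdl | apply: dvdz_gcdr].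
by rewrite -(sqf _ gg_n) ger0_norm.
Qed.

Lemma fundamental_discriminant_4mul (m : int) :
  fundamental_discriminant (4 * m) -> squarefree_int m.
Proof.
case=> [[]|[m' [/eqP]]]; first by rewrite mulrC modzMl.
by rewrite (inj_eq (mulfI _)) // => /eqP -> [].
Qed.

Lemma squarefree_dE (a4 a6 u v : int) :
  squarefree_int (dE a4 a6 u v) -> squarefree_int v /\ coprimez u v.
Proof.
move=> sqf; split; first by apply: squarefree_int_dvd sqf; apply: dvdz_mulr.
have := squarefree_int_coprime sqf (dvdzz _).
have -> : u ^+ 3 + a4 * u * v ^+ 2 - a6 * v ^+ 3 =
    (a4 * u * v - a6 * v ^+ 2) * v + u ^+ 3 by ring.
by rewrite /coprimez gcdzMDl -/(coprimez _ _) coprimez_pexpr // coprimez_sym.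
Qed.

Lemma dvdz_anti_gt0 (m n : int) :
  0 < m -> 0 < n -> (m %| n)%Z -> (n %| m)%Z -> m = n.
Proof.
move=> m_gt0 n_gt0 mn nm; rewrite -(gtz0_abs m_gt0) -(gtz0_abs n_gt0).
by congr Posz; apply/eqP; rewrite eqn_dvd; apply/andP.
Qed.

Lemma sqr_eq_cube (q s : int) :
  0 < s -> s ^+ 2 = q ^+ 3 -> exists2 C, 0 < C & q = C ^+ 2 /\ s = C ^+ 3.
Proof.
move=> s_gt0 sq; have q_gt0 : 0 < q by nra.
have /dvdzP[C def_s] : (q %| s)%Z.
  by rewrite -(dvdz_pexp2r _ _ (isT : (0 < 2)%N)) sq exprS mulrC dvdz_mulr.
have def_q : q = C ^+ 2.
  have : (C ^+ 2 - q) * q ^+ 2 = 0 by rewrite mulrBl -exprMn -def_s sq; ring.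
  by move/eqP; rewrite mulf_eq0 expf_eq0 (gt_eqF q_gt0) orbF subr_eq0 => /eqP.
have s_C : s = C ^+ 3 by rewrite def_s def_q; ring.
by exists C => //; rewrite s_C in s_gt0; nra.
Qed.

Lemma curve_den_sqr_eq_cube (a4 a6 p q r s : int) :
  coprimez p q -> coprimez r s -> 0 < q -> 0 < s ->
  r ^+ 2 * q ^+ 3 = s ^+ 2 * (p ^+ 3 + a4 * p * q ^+ 2 + a6 * q ^+ 3) ->
  s ^+ 2 = q ^+ 3.
Proof.
move=> cpq crs q_gt0 s_gt0 eq_rs.
have cqK : coprimez (q ^+ 3) (p ^+ 3 + a4 * p * q ^+ 2 + a6 * q ^+ 3).
  have -> : p ^+ 3 + a4 * p * q ^+ 2 + a6 * q ^+ 3 =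
      (a4 * p * q + a6 * q ^+ 2) * q + p ^+ 3 by ring.
  rewrite coprimez_pexpl // /coprimez gcdzMDl -/(coprimez _ _).
  by rewrite coprimezXr // coprimez_sym.
have csr : coprimez (s ^+ 2) (r ^+ 2) by rewrite coprimezXl // coprimezXr // coprimez_sym.
apply: dvdz_anti_gt0; rewrite ?exprn_gt0 //.
  by rewrite -(Gauss_dvdzr _ csr) eq_rs dvdz_mulr.
by rewrite -(Gauss_dvdzl _ cqK) -eq_rs dvdz_mull.
Qed.

Lemma on_curve_int_coords (a4 a6 : int) (x y : rat) : on_curve a4 a6 x y ->
  exists A B C : int,
    [/\ coprimez A C, coprimez B C, 0 < C,
        x = A%:~R / (C%:~R) ^+ 2 & y = B%:~R / (C%:~R) ^+ 3] /\
    B ^+ 2 = A ^+ 3 + a4 * A * C ^+ 4 + a6 * C ^+ 6.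
Proof.
rewrite /on_curve => xy.
have eq_int : numq y ^+ 2 * denq x ^+ 3 =
    denq y ^+ 2 * (numq x ^+ 3 + a4 * numq x * denq x ^+ 2 + a6 * denq x ^+ 3).
  apply: (@intr_inj rat); rewrite !(rmorphM, rmorphD, rmorphXn) /= !numqE exprMn xy; ring.
have sq := curve_den_sqr_eq_cube (coprime_num_den x) (coprime_num_den y)
  (denq_gt0 x) (denq_gt0 y) eq_int.
have [C C_gt0 [qC sC]] := sqr_eq_cube (denq_gt0 y) sq.
exists (numq x), (numq y), C; split; first split => //.
- by have := coprime_num_den x; rewrite qC /coprimez /gcdz abszX coprime_pexpr.
- by have := coprime_num_den y; rewrite sC /coprimez /gcdz abszX coprime_pexpr.
- by rewrite -rmorphXn -qC divq_num_den.
- by rewrite -rmorphXn -sC divq_num_den.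
apply: (mulIf (expf_neq0 6 (lt0r_neq0 C_gt0))).
by move: eq_int; rewrite qC sC -!exprM => ->; ring.
Qed.

Lemma cubic_le_left (R : realDomainType) (p q t0 t : R) :
  t0 <= 0 -> 0 <= 3 * t0 ^+ 2 + p -> t <= t0 ->
  t ^+ 3 + p * t + q <= t0 ^+ 3 + p * t0 + q.
Proof.
move=> t0_le0 slope_ge0 t_le.
have -> : t ^+ 3 + p * t + q = t0 ^+ 3 + p * t0 + q
    + (t - t0) * ((t - t0) * (t + 2 * t0) + (3 * t0 ^+ 2 + p)) by ring.
rewrite gerDl mulr_le0_ge0 ?subr_le0 // addr_ge0 // mulr_le0 ?subr_le0 //.
lra.
Qed.

Lemma curve_point_right (a4 a6 u v A B C : int) :
  0 < u -> 0 < v -> 0 < 3 * u ^+ 2 + a4 * v ^+ 2 -> 0 < dE a4 a6 u v -> 0 < C ->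
  B ^+ 2 = A ^+ 3 + a4 * A * C ^+ 4 + a6 * C ^+ 6 ->
  0 < A * v + C ^+ 2 * u.
Proof.
move=> u_gt0 v_gt0 slope_gt0 d_gt0 C_gt0 eqB.
rewrite ltNge; apply/negP => a_le0.
pose f t := t ^+ 3 + a4 * v ^+ 2 * C ^+ 4 * t + a6 * v ^+ 3 * C ^+ 6.
have fX : f (A * v) = v ^+ 3 * B ^+ 2 by rewrite /f eqB; ring.
have fU : v * f (- (C ^+ 2 * u)) = - (C ^+ 6 * dE a4 a6 u v) by rewrite /f /dE; ring.
have fU_lt0 : f (- (C ^+ 2 * u)) < 0.
  by rewrite -(pmulr_rlt0 _ v_gt0) fU oppr_lt0 mulr_gt0 ?exprn_gt0.
have fX_ge0 : 0 <= f (A * v) by rewrite fX mulr_ge0 ?sqr_ge0 ?exprn_ge0 ?ltW.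
suff : f (A * v) <= f (- (C ^+ 2 * u)) by lra.
apply: cubic_le_left; first by rewrite oppr_le0 ltW // mulr_gt0 ?exprn_gt0.
  have -> : 3 * (- (C ^+ 2 * u)) ^+ 2 + a4 * v ^+ 2 * C ^+ 4
    = C ^+ 4 * (3 * u ^+ 2 + a4 * v ^+ 2) by ring.
  by rewrite ltW // mulr_gt0 ?exprn_gt0.
lra.
Qed.

Lemma pos_def_form_neg_disc (a b c : int) :
  0 < a -> b ^+ 2 - 4 * a * c < 0 -> pos_def_form a b c.
Proof.
move=> a_gt0 disc_lt0 x y xy_neq0.
have a4_gt0 : 0 < 4 * a by rewrite mulr_gt0.
rewrite -(pmulr_rgt0 _ a4_gt0).
have -> : 4 * a * (a * x ^+ 2 + b * x * y + c * y ^+ 2) =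
    (2 * a * x + b * y) ^+ 2 - (b ^+ 2 - 4 * a * c) * y ^+ 2 by ring.
have [y0 | y_neq0] := eqVneq y 0.
  have x_neq0 : x != 0 by move: xy_neq0; rewrite y0 xpair_eqE andbT.
  by rewrite y0 !(expr0n, mulr0, subr0, addr0) /= exprn_even_gt0 // !mulf_neq0 // gt_eqF.
have := sqr_ge0 (2 * a * x + b * y); have : 0 < y ^+ 2 by rewrite exprn_even_gt0.
nra.
Qed.

Lemma form_of_sqrt_mod (M b d : int) :
  0 < M -> 0 < d -> (M %| b ^+ 2 + d)%Z ->
  pos_def_form M (2 * b) ((b ^+ 2 + d) %/ M)%Z /\
  (2 * b) ^+ 2 - 4 * M * ((b ^+ 2 + d) %/ M)%Z = - (4 * d).
Proof.
move=> M_gt0 d_gt0 /divzK Mc.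
have disc : (2 * b) ^+ 2 - 4 * M * ((b ^+ 2 + d) %/ M)%Z = - (4 * d).
  by rewrite -mulrA [M * _]mulrC Mc; ring.
by split=> //; apply: pos_def_form_neg_disc; rewrite ?disc ?oppr_lt0 ?mulr_gt0.
Qed.

Lemma sqrt_mod_of_inverse (M gam b d K mu : int) :
  b ^+ 2 + gam ^+ 2 * d = M * K -> (gam * mu == 1 %[mod M])%Z ->
  (M %| (mu * b) ^+ 2 + d)%Z.
Proof.
rewrite eqz_mod_dvd => eqK /dvdzP[t eq_t].
apply/dvdzP; exists (mu ^+ 2 * K - d * t * (gam * mu + 1)).
have -> : (mu * b) ^+ 2 + d =
    mu ^+ 2 * (b ^+ 2 + gam ^+ 2 * d) - d * (gam * mu - 1) * (gam * mu + 1) by ring.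
by rewrite eqK eq_t; ring.
Qed.

Lemma gcdz_cofactors (C v : int) : v != 0 ->
  exists C1 v1 : int,
    [/\ C = C1 * gcdz C v, v = v1 * gcdz C v, 0 < gcdz C v & coprimez C1 v1].
Proof.
move=> v_neq0.
have g_gt0 : 0 < gcdz C v by rewrite lt_def gcdz_eq0 (negbTE v_neq0) andbF.
have /dvdzP[C1 eC] := dvdz_gcdl C v; have /dvdzP[v1 ev] := dvdz_gcdr C v.
exists C1, v1; split=> //; apply/eqP; apply: (mulIf (lt0r_neq0 g_gt0)).
by rewrite mul1r -[X in _ * X](gtz0_abs g_gt0) mulz_gcdl -eC -ev.
Qed.

(* [v^4 B^2 + C^6 d_E(u,v) = v^4 C^6 (f(A/C^2) - f(-u/v))] for [f(x) = x^3 + a4 x + a6],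
   and [f(s) - f(t)] is divisible by [s - t = a/(v C^2)]; everything is divided by [g^4]. *)
Lemma curve_norm_identity (a4 a6 u A B g C1 v1 : int) :
  B ^+ 2 = A ^+ 3 + a4 * A * (C1 * g) ^+ 4 + a6 * (C1 * g) ^+ 6 ->
  (B * v1 ^+ 2) ^+ 2 + (g * C1 ^+ 3) ^+ 2 * dE a4 a6 u (v1 * g) =
  v1 * (A * v1 + g * C1 ^+ 2 * u) *
  ((A * v1) ^+ 2 - A * v1 * (g * C1 ^+ 2 * u) + (g * C1 ^+ 2 * u) ^+ 2
   + a4 * v1 ^+ 2 * g ^+ 4 * C1 ^+ 4).
Proof. by move=> eqB; rewrite exprMn eqB /dE; ring. Qed.

Lemma coprimez_reduced_moduli (A u g C1 v1 : int) :
  coprimez A (C1 * g) -> coprimez v1 g -> coprimez C1 v1 ->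
  coprimez (g * C1 ^+ 3) (v1 * (A * v1 + g * C1 ^+ 2 * u)).
Proof.
rewrite coprimezMr => /andP[cAC1 cAg] cv1g cC1v1.
have cga : coprimez g (A * v1 + g * C1 ^+ 2 * u).
  rewrite addrC (_ : g * C1 ^+ 2 * u = C1 ^+ 2 * u * g); last by ring.
  rewrite /coprimez gcdzMDl -/(coprimez _ _) coprimezMr.
  by rewrite !(coprimez_sym g) cAg cv1g.
have cC1a : coprimez C1 (A * v1 + g * C1 ^+ 2 * u).
  rewrite addrC (_ : g * C1 ^+ 2 * u = g * C1 * u * C1); last by ring.
  by rewrite /coprimez gcdzMDl -/(coprimez _ _) coprimezMr cC1v1 coprimez_sym cAC1.
by rewrite coprimezMl coprimez_pexpl // !coprimezMr cga cC1a cC1v1 coprimez_sym cv1g.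
Qed.

Lemma form_of_point (a4 a6 u v A B C : int) :
  0 < v -> squarefree_int v -> 0 < dE a4 a6 u v -> coprimez A C ->
  B ^+ 2 = A ^+ 3 + a4 * A * C ^+ 4 + a6 * C ^+ 6 -> 0 < A * v + C ^+ 2 * u ->
      let a := A * v + C ^+ 2 * u in
      let g := gcdz C v in
      [/\ (g ^+ 2 %| C ^+ 3)%Z, (g ^+ 2 %| v * a)%Z,
          (exists mu : int,
             ((C ^+ 3 %/ g ^+ 2)%Z * mu == 1 %[mod (v * a %/ g ^+ 2)%Z])%Z) &
          (forall mu : int,
             ((C ^+ 3 %/ g ^+ 2)%Z * mu == 1 %[mod (v * a %/ g ^+ 2)%Z])%Z ->
             let fa := (v * a %/ g ^+ 2)%Z in
             let fb := 2 * mu * (B * v ^+ 2 %/ g ^+ 2)%Z in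
             let N := mu ^+ 2 * (B ^+ 2 * v ^+ 4 %/ g ^+ 4)%Z + dE a4 a6 u v in
             [/\ (g ^+ 2 %| B * v ^+ 2)%Z, (g ^+ 4 %| B ^+ 2 * v ^+ 4)%Z,
                 (fa %| N)%Z,
                 pos_def_form fa fb (N %/ fa)%Z &
                 fb ^+ 2 - 4 * fa * (N %/ fa)%Z = - DE a4 a6 u v])].
Proof.
move=> v_gt0 sqf d_gt0 cAC eqB a_gt0 a g.
have [C1 [v1 [eC ev g_gt0 cC1v1]]] := gcdz_cofactors C (lt0r_neq0 v_gt0).
rewrite -/g in eC ev g_gt0.
have cv1g : coprimez v1 g by apply: (squarefree_int_coprime sqf); rewrite -ev.
rewrite {}/a; clearbody g; subst C v.
set a1 := A * v1 + g * C1 ^+ 2 * u; set M := v1 * a1; set gam := g * C1 ^+ 3.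
have g2 : g ^+ 2 != 0 by rewrite expf_neq0 // lt0r_neq0.
have g4 : g ^+ 4 != 0 by rewrite expf_neq0 // lt0r_neq0.
have -> : (C1 * g) ^+ 3 = gam * g ^+ 2 by rewrite /gam; ring.
have -> : v1 * g * (A * (v1 * g) + (C1 * g) ^+ 2 * u) = M * g ^+ 2.
  by rewrite /M /a1; ring.
have -> : B * (v1 * g) ^+ 2 = B * v1 ^+ 2 * g ^+ 2 by ring.
have -> : B ^+ 2 * (v1 * g) ^+ 4 = (B * v1 ^+ 2) ^+ 2 * g ^+ 4 by ring.
rewrite !mulzK //.
have M_gt0 : 0 < M.
  have ea : A * (v1 * g) + (C1 * g) ^+ 2 * u = a1 * g by rewrite /a1; ring.
  by rewrite mulr_gt0 // -(pmulr_lgt0 _ g_gt0) // -ea.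
have cop : coprimez gam M by apply: coprimez_reduced_moduli.
split; try exact: dvdz_mull (dvdzz _).
  have /coprimezP[[m n] /= Bezout] := cop.
  by exists m; rewrite eqz_mod_dvd -Bezout; apply/dvdzP; exists (- n); ring.
move=> mu inv_mu /=.
have sqrt_d := sqrt_mod_of_inverse (curve_norm_identity u v1 eqB) inv_mu.
have [pd disc] := form_of_sqrt_mod M_gt0 d_gt0 sqrt_d.
rewrite -(mulrA 2) -(exprMn _ mu) /DE.
by split=> //; exact: dvdz_mull (dvdzz _).
Qed.

Theorem lemma2p2 (a4 a6 u v : int) :
  nonsingular a4 a6 ->
  map_suitable a4 a6 u v ->
  - DE a4 a6 u v < 0 ->
  fundamental_discriminant (- DE a4 a6 u v) ->
  (* (1) *)
  (squarefree_int v /\ gcdz u v = 1)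
  /\
  (* (2) and (3) *)
  (forall x y : rat, on_curve a4 a6 x y ->
    exists A B C : int,
      [/\ gcdz A C = 1, gcdz B C = 1, 0 < C,
          x = A%:~R / (C%:~R) ^+ 2 & y = B%:~R / (C%:~R) ^+ 3] /\
      let a := A * v + C ^+ 2 * u in
      let g := gcdz C v in
      (* the quotients C^3/g^2 and va/g^2 are integers *)
      [/\ (g ^+ 2 %| C ^+ 3)%Z, (g ^+ 2 %| v * a)%Z,
          (exists mu : int,
             ((C ^+ 3 %/ g ^+ 2)%Z * mu == 1 %[mod (v * a %/ g ^+ 2)%Z])%Z) &
          (forall mu : int,
             ((C ^+ 3 %/ g ^+ 2)%Z * mu == 1 %[mod (v * a %/ g ^+ 2)%Z])%Z ->
             let fa := (v * a %/ g ^+ 2)%Z in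
             let fb := 2 * mu * (B * v ^+ 2 %/ g ^+ 2)%Z in
             let N := mu ^+ 2 * (B ^+ 2 * v ^+ 4 %/ g ^+ 4)%Z + dE a4 a6 u v in
             [/\ (g ^+ 2 %| B * v ^+ 2)%Z, (g ^+ 4 %| B ^+ 2 * v ^+ 4)%Z,
                 (fa %| N)%Z,
                 pos_def_form fa fb (N %/ fa)%Z &
                 fb ^+ 2 - 4 * fa * (N %/ fa)%Z = - DE a4 a6 u v])]).
Proof.
move=> _ [u_gt0 v_gt0 slope_gt0 D_gt0] _ fd.
have d_gt0 : 0 < dE a4 a6 u v by move: D_gt0; rewrite /DE pmulr_rgt0.
have [sqf_v cop_uv] : squarefree_int v /\ coprimez u v.
  apply/squarefree_dE/squarefree_intN/fundamental_discriminant_4mul.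
  by rewrite mulrN; exact: fd.
split; first by split=> //; apply/eqP.
move=> x y /on_curve_int_coords[A [B [C [[cAC cBC C_gt0 ex ey] eqB]]]].
exists A, B, C; split; first by split=> //; apply/eqP.
by apply: form_of_point => //; apply: (curve_point_right (a6 := a6)) eqB.
Qed.
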